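(* Let $\gamma>1$ and $a>0$, and set $v_{1,1}=a$, $v_{2,1}=\gamma a$. Then there exist $b>0$ and $\vartheta\in(-\pi,\pi]$ such that, with $w_{1,1}=w_{2,1}=b$, one has $2\omega_-(\vartheta)=\omega_+(2\vartheta)$.
   Context: With $c_i:=2v_{i,1}+w_{i,1}$, for $\vartheta\in\mathbb R$ define $$\omega_\pm(\vartheta):=\sqrt{\tfrac12\Big(c_1+c_2\pm\sqrt{(c_1-c_2)^2+8v_{1,1}v_{2,1}(\cos\vartheta+1)}\Big)}.$$ (In the stated setting $w_{i,1}>0$, $4v_{i,1}+w_{i,1}>0$, $v_{1,1}v_{2,1}>0$, $c_2>c_1$, so both branches are positive.) *)

From Stdlib Require Import Reals.
Open Scope R_scope.

Definition cc (v w : R) : R := 2 * v + w.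

Definition omega_plus (v11 v21 w11 w21 theta : R) : R :=
  let c1 := cc v11 w11 in let c2 := cc v21 w21 in
  sqrt (/ 2 * (c1 + c2 + sqrt ((c1 - c2) ^ 2 + 8 * v11 * v21 * (cos theta + 1)))).

Definition omega_minus (v11 v21 w11 w21 theta : R) : R :=
  let c1 := cc v11 w11 in let c2 := cc v21 w21 in
  sqrt (/ 2 * (c1 + c2 - sqrt ((c1 - c2) ^ 2 + 8 * v11 * v21 * (cos theta + 1)))).

From Stdlib Require Import Reals Lra.
Open Scope R_scope.

(* For equal on-site couplings [w11 = w21 = b] and [theta = 0] the inner
   discriminant is the perfect square [(2 (v11 + v21))^2], so the two branches
   collapse to [omega_-(0) = sqrt b] and [omega_+(0) = sqrt (2 (v11 + v21) + b)].
   The resonance [2 omega_-(0) = omega_+(0)] then reads [4 b = 2 (v11 + v21) + b],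
   i.e. [b = 2 (v11 + v21) / 3]. *)

Lemma discriminant_equal_w_at_0 (v1 v2 b : R) :
  0 <= v1 -> 0 <= v2 ->
  sqrt ((cc v1 b - cc v2 b) ^ 2 + 8 * v1 * v2 * (cos 0 + 1)) = 2 * (v1 + v2).
Proof.
  intros hv1 hv2; unfold cc; rewrite cos_0.
  replace ((2 * v1 + b - (2 * v2 + b)) ^ 2 + 8 * v1 * v2 * (1 + 1))
    with ((2 * (v1 + v2)) ^ 2) by ring.
  apply sqrt_pow2; lra.
Qed.

Lemma omega_minus_equal_w_at_0 (v1 v2 b : R) :
  0 <= v1 -> 0 <= v2 -> omega_minus v1 v2 b b 0 = sqrt b.
Proof.
  intros hv1 hv2; unfold omega_minus.
  rewrite discriminant_equal_w_at_0 by assumption.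
  f_equal; unfold cc; field.
Qed.

Lemma omega_plus_equal_w_at_0 (v1 v2 b : R) :
  0 <= v1 -> 0 <= v2 -> omega_plus v1 v2 b b 0 = sqrt (2 * (v1 + v2) + b).
Proof.
  intros hv1 hv2; unfold omega_plus.
  rewrite discriminant_equal_w_at_0 by assumption.
  f_equal; unfold cc; field.
Qed.

Lemma double_sqrt (x : R) : 0 <= x -> 2 * sqrt x = sqrt (4 * x).
Proof.
  intros hx.
  rewrite sqrt_mult by lra.
  replace 4 with (2 ^ 2) by ring.
  rewrite sqrt_pow2 by lra; reflexivity.
Qed.

Lemma resonance_equal_w_at_0 (v1 v2 : R) :
  0 <= v1 -> 0 <= v2 ->
  let b := 2 * (v1 + v2) / 3 in
  2 * omega_minus v1 v2 b b 0 = omega_plus v1 v2 b b 0.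
Proof.
  intros hv1 hv2 b.
  rewrite omega_minus_equal_w_at_0, omega_plus_equal_w_at_0 by assumption.
  rewrite double_sqrt by (unfold b; lra).
  f_equal; unfold b; field.
Qed.

Theorem mainTheorem2 (gamma a : R) (hgamma : 1 < gamma) (ha : 0 < a) :
  exists b theta : R,
    0 < b /\ - PI < theta <= PI /\
    2 * omega_minus a (gamma * a) b b theta =
      omega_plus a (gamma * a) b b (2 * theta).
Proof.
  assert (hga : 0 < gamma * a) by nra.
  exists (2 * (a + gamma * a) / 3), 0.
  split; [lra |].
  split; [pose proof PI_RGT_0; lra |].
  rewrite Rmult_0_r.
  apply resonance_equal_w_at_0; lra.
Qed.
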